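(* Let $R$ be a locally stable commutative ring. Then $R$ is an elementary divisor ring if and only if $R$ is a Bézout ring.
   Context: All rings are commutative with identity. A ring $R$ has stable range 1 if whenever $aR+bR=R$ there is $y\in R$ with $a+by$ a unit. $R$ is locally stable if whenever $a,b\in R$ with $aR+bR=R$ there is $y\in R$ such that $R/(a+by)R$ has stable range 1. A ring is Bézout if every finitely generated ideal is principal. A matrix $A$ (not necessarily square) admits diagonal reduction if there are invertible $P,Q$ with $PAQ$ diagonal $(d_{ij})$ and $d_{ii}\mid d_{(i+1)(i+1)}$ for each $i$; $R$ is an elementary divisor ring if every matrix over $R$ admits diagonal reduction. *)

From mathcomp Require Import all_boot all_order all_algebra.
Set Implicit Arguments. Unset Strict Implicit. Unset Printing Implicit Defensive.
Import GRing.Theory.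
Local Open Scope ring_scope.

Definition rdvd (R : comPzRingType) (x y : R) : Prop := exists r : R, y = x * r.

Definition runit (R : comPzRingType) (u : R) : Prop := exists v : R, u * v = 1.

Definition comax (R : comPzRingType) (a b : R) : Prop :=
  exists x y : R, a * x + b * y = 1.

Definition stable_range1 (R : comPzRingType) : Prop :=
  forall a b : R, comax a b -> exists y : R, runit (a + b * y).

(* The quotient ring R/cR has stable range 1, written out on representatives:
   an element of R/cR is the class of some a in R, and u == v in R/cR iff
   c | (u - v). *)
Definition stable_range1_mod (R : comPzRingType) (c : R) : Prop :=
  forall a b : R,
    (exists x z : R, rdvd c (a * x + b * z - 1)) ->
    exists y : R, exists v : R, rdvd c ((a + b * y) * v - 1).

Definition locally_stable (R : comPzRingType) : Prop :=
  forall a b : R, comax a b -> exists y : R, stable_range1_mod (a + b * y).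

Definition bezout_ring (R : comPzRingType) : Prop :=
  forall (n : nat) (a : 'I_n -> R), exists d : R,
    forall x : R,
      (exists c : 'I_n -> R, x = \sum_(i < n) c i * a i) <-> (exists r : R, x = d * r).

Definition invertible_mx (R : comPzRingType) (n : nat) (P : 'M[R]_n) : Prop :=
  exists P' : 'M[R]_n, P *m P' = 1%:M /\ P' *m P = 1%:M.

Definition diag_divchain (R : comPzRingType) (m n : nat) (D : 'M[R]_(m, n)) : Prop :=
  (forall (i : 'I_m) (j : 'I_n), nat_of_ord i <> nat_of_ord j -> D i j = 0) /\
  (forall (i i' : 'I_m) (j j' : 'I_n),
      nat_of_ord i = nat_of_ord j -> nat_of_ord i' = nat_of_ord j' ->
      nat_of_ord i' = (nat_of_ord i).+1 -> rdvd (D i j) (D i' j')).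

Definition admits_diagonal_reduction (R : comPzRingType) (m n : nat)
  (A : 'M[R]_(m, n)) : Prop :=
  exists (P : 'M[R]_m) (Q : 'M[R]_n),
    invertible_mx P /\ invertible_mx Q /\ diag_divchain (P *m A *m Q).

Definition elementary_divisor_ring (R : comPzRingType) : Prop :=
  forall (m n : nat) (A : 'M[R]_(m, n)), admits_diagonal_reduction A.

From mathcomp Require Import all_boot all_order all_algebra.
From mathcomp Require Import ring zify.
Set Implicit Arguments. Unset Strict Implicit. Unset Printing Implicit Defensive.
Import GRing.Theory.
Local Open Scope ring_scope.

(* A locally stable Bezout ring is Hermite: if d = a u + b v, a = d a' and
   b = d b', then d (1 - a' u - b' v) = 0, and local stability yields stable
   range 2, which corrects a', b' modulo 1 - a' u - b' v into a comaximal
   pair.  It also satisfies Kaplansky's condition: for a x + b y + c z = 1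
   pick k with R/wR of stable range 1, where w = b + (a x + c z) k, and let
   g = gcd(w, c); then R/gR has stable range 1 and a is a unit in it, and the
   Bezout identity for g yields p, q such that g lies in the ideal of p a and
   p b + q c while p a is a unit modulo g.

   A Hermite ring satisfying Kaplansky's condition is an elementary divisor
   ring.  Working two rows at a time, the condition gives a row combination
   p A of a matrix A whose entries generate an ideal containing the gcd g of
   all entries of A.  Reducing rows to (d, 0, ..., 0) by invertible column
   operations moves g into the corner, which then clears its row and column,
   and induction on the size finishes.  Conversely, diagonalising a single
   row shows that its ideal is principal. *)

Section MatrixDivisibility.
Variable R : comPzRingType.
Implicit Types a b d g x y : R.

Lemma rdvd_refl a : rdvd a a. Proof. by exists 1; rewrite mulr1. Qed.
Lemma rdvd0 a : rdvd a 0. Proof. by exists 0; rewrite mulr0. Qed.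
Lemma rdvdD a x y : rdvd a x -> rdvd a y -> rdvd a (x + y).
Proof. by move=> [r ->] [s ->]; exists (r + s); rewrite mulrDr. Qed.
Lemma rdvdN a x : rdvd a x -> rdvd a (- x).
Proof. by move=> [r ->]; exists (- r); rewrite mulrN. Qed.
Lemma rdvdMr a x y : rdvd a x -> rdvd a (x * y).
Proof. by move=> [r ->]; exists (r * y); rewrite mulrA. Qed.
Lemma rdvdMl a x y : rdvd a y -> rdvd a (x * y).
Proof. by rewrite mulrC; apply: rdvdMr. Qed.
Lemma rdvd_sum a I (r : seq I) (P : pred I) (F : I -> R) :
  (forall i, P i -> rdvd a (F i)) -> rdvd a (\sum_(i <- r | P i) F i).
Proof. by move=> h; apply: big_ind => //; [apply: rdvd0 | apply: rdvdD]. Qed.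

Definition dvd_mx d m n (A : 'M[R]_(m, n)) := forall i j, rdvd d (A i j).

Lemma dvd_mxMl d m n p (P : 'M[R]_(p, m)) (A : 'M[R]_(m, n)) :
  dvd_mx d A -> dvd_mx d (P *m A).
Proof. by move=> h i j; rewrite mxE; apply: rdvd_sum => k _; apply: rdvdMl. Qed.

Lemma dvd_mxMr d m n p (A : 'M[R]_(m, n)) (Q : 'M[R]_(n, p)) :
  dvd_mx d A -> dvd_mx d (A *m Q).
Proof. by move=> h i j; rewrite mxE; apply: rdvd_sum => k _; apply: rdvdMr. Qed.

Lemma dvd_mx_scalar d m x : rdvd d x -> dvd_mx d (x%:M : 'M[R]_m).
Proof.
by move=> h i j; rewrite mxE; case: (i == j); rewrite ?mulr1n ?mulr0n //; apply: rdvd0.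
Qed.

Lemma dvd_mx0 d m n : dvd_mx d (0 : 'M[R]_(m, n)).
Proof. by move=> i j; rewrite mxE; apply: rdvd0. Qed.

Lemma dvd_row_mx d m n1 n2 (A : 'M[R]_(m, n1)) (B : 'M[R]_(m, n2)) :
  dvd_mx d A -> dvd_mx d B -> dvd_mx d (row_mx A B).
Proof.
by move=> hA hB i j; case: (split_ordP j) => k ->; rewrite ?row_mxEl ?row_mxEr.
Qed.

Lemma dvd_mx_trans g d m n (A : 'M[R]_(m, n)) : rdvd g d -> dvd_mx d A -> dvd_mx g A.
Proof. by move=> [r ->] h i j; have [s ->] := h i j; exists (r * s); rewrite mulrA. Qed.

Lemma dvd_col_mx d m1 m2 n (A : 'M[R]_(m1, n)) (B : 'M[R]_(m2, n)) :
  dvd_mx d A -> dvd_mx d B -> dvd_mx d (col_mx A B).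
Proof.
by move=> hA hB i j; case: (split_ordP i) => k ->; rewrite ?col_mxEu ?col_mxEd.
Qed.

Definition rideal n (v : 'rV[R]_n) x := exists c : 'cV[R]_n, x = (v *m c) 0 0.

Lemma ridealD n (v : 'rV[R]_n) x y : rideal v x -> rideal v y -> rideal v (x + y).
Proof. by move=> [c ->] [c' ->]; exists (c + c'); rewrite mulmxDr [RHS]mxE. Qed.

Lemma ridealMr n (v : 'rV[R]_n) x y : rideal v x -> rideal v (x * y).
Proof. by move=> [c ->]; exists (y *: c); rewrite -scalemxAr [RHS]mxE mulrC. Qed.

Lemma rideal_dvd n (v : 'rV[R]_n) g x : rideal v g -> rdvd g x -> rideal v x.
Proof. by move=> h [r ->]; apply: ridealMr. Qed.

Lemma rideal_entry n (v : 'rV[R]_n) j : rideal v (v 0 j).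
Proof. by exists (delta_mx j 0); rewrite -colE mxE. Qed.

Lemma rideal_mulmxr n k (v : 'rV[R]_n) (M : 'M[R]_(n, k)) x :
  rideal (v *m M) x -> rideal v x.
Proof. by move=> [c ->]; exists (M *m c); rewrite mulmxA. Qed.

Lemma rideal_mulmxl n (P : 'M[R]_1) (v : 'rV[R]_n) x : rideal (P *m v) x -> rideal v x.
Proof.
move=> [c ->]; exists (P 0 0 *: c).
by rewrite {1}[P]mx11_scalar mul_scalar_mx -scalemxAl -scalemxAr.
Qed.

Lemma rideal_row_mxl n1 n2 (v : 'rV[R]_n1) (w : 'rV[R]_n2) x :
  rideal v x -> rideal (row_mx v w) x.
Proof. by move=> [c ->]; exists (col_mx c 0); rewrite mul_row_col mulmx0 addr0. Qed.

Lemma rideal_row_mxr n1 n2 (v : 'rV[R]_n1) (w : 'rV[R]_n2) x :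
  rideal w x -> rideal (row_mx v w) x.
Proof. by move=> [c ->]; exists (col_mx 0 c); rewrite mul_row_col mulmx0 add0r. Qed.

Lemma rideal_scale n (v : 'rV[R]_n) a x : rideal v x -> rideal (a *: v) (a * x).
Proof. by move=> [c ->]; exists c; rewrite -scalemxAl [RHS]mxE. Qed.

Lemma rideal_scalar_mx x : rideal (x%:M : 'rV[R]_1) x.
Proof. by have := rideal_entry (x%:M : 'rV[R]_1) 0; rewrite mxE mulr1n. Qed.

Lemma dvd_rideal n (v : 'rV[R]_n) g x : dvd_mx g v -> rideal v x -> rdvd g x.
Proof. by move=> hv [c ->]; apply: dvd_mxMr. Qed.

Lemma invertible1 n : invertible_mx (1%:M : 'M[R]_n).
Proof. by exists 1%:M; rewrite mulmx1. Qed.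

Lemma invertibleM n (P Q : 'M[R]_n) :
  invertible_mx P -> invertible_mx Q -> invertible_mx (P *m Q).
Proof.
move=> [P' [h1 h2]] [Q' [h3 h4]]; exists (Q' *m P'); split.
  by rewrite mulmxA -(mulmxA P) h3 mulmx1 h1.
by rewrite mulmxA -(mulmxA Q') h2 mulmx1 h4.
Qed.

Lemma invertible_block m n (P : 'M[R]_m) (Q : 'M[R]_n) :
  invertible_mx P -> invertible_mx Q -> invertible_mx (block_mx P 0 0 Q).
Proof.
move=> [P' [h1 h2]] [Q' [h3 h4]]; exists (block_mx P' 0 0 Q').
rewrite !mulmx_block !mulmx0 !mul0mx !addr0 !add0r h1 h2 h3 h4.
by rewrite -!scalar_mx_block.
Qed.

Lemma invertible_block1 m n (Q : 'M[R]_n) :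
  invertible_mx Q -> invertible_mx (block_mx (1%:M : 'M[R]_m) 0 0 Q).
Proof. exact/invertible_block/invertible1. Qed.

Lemma rideal_invertibler n (v : 'rV[R]_n) (Q : 'M[R]_n) x :
  invertible_mx Q -> rideal (v *m Q) x <-> rideal v x.
Proof.
move=> [Q' [hQ _]]; split; first exact: rideal_mulmxr.
by rewrite -{1}[v]mulmx1 -hQ mulmxA; apply: rideal_mulmxr.
Qed.

Lemma rideal_invertiblel n (P : 'M[R]_1) (v : 'rV[R]_n) x :
  invertible_mx P -> rideal (P *m v) x <-> rideal v x.
Proof.
move=> [P' [_ hP]]; split; first exact: rideal_mulmxl.
by rewrite -{1}[v]mul1mx -hP -mulmxA; apply: rideal_mulmxl.
Qed.

Lemma dvd_mx_invertible d m n (A : 'M[R]_(m, n)) (Q : 'M[R]_n) :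
  invertible_mx Q -> dvd_mx d (A *m Q) -> dvd_mx d A.
Proof. by move=> [Q' [hQ _]] h; rewrite -[A]mulmx1 -hQ mulmxA; apply: dvd_mxMr. Qed.

Lemma row_reduction_gcd k (v : 'rV[R]_(1 + k)) (Q : 'M[R]_(1 + k)) d :
  invertible_mx Q -> v *m Q = row_mx d%:M 0 -> dvd_mx d v /\ rideal v d.
Proof.
move=> iQ vQ; split.
  apply: (dvd_mx_invertible iQ); rewrite vQ.
  by apply: dvd_row_mx; [apply/dvd_mx_scalar/rdvd_refl | apply: dvd_mx0].
by apply/(rideal_invertibler _ _ iQ); rewrite vQ; apply/rideal_row_mxl/rideal_scalar_mx.
Qed.

Lemma rideal_row_scalar n d x :
  rideal (row_mx d%:M (0 : 'rV[R]_n)) x <-> rdvd d x.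
Proof.
split=> [|dx]; last by apply/rideal_dvd/dx/rideal_row_mxl/rideal_scalar_mx.
by apply: dvd_rideal; apply: dvd_row_mx; [apply/dvd_mx_scalar/rdvd_refl | apply: dvd_mx0].
Qed.

Lemma rideal_sumP n (a : 'I_n -> R) x :
  rideal (\row_i a i) x <-> exists c : 'I_n -> R, x = \sum_i c i * a i.
Proof.
split=> [[c ->] | [c ->]]; first exists (fun i => c i 0).
  by rewrite mxE; apply: eq_bigr => i _; rewrite mxE mulrC.
by exists (\col_i c i); rewrite mxE; apply: eq_bigr => i _; rewrite !mxE mulrC.
Qed.

(* [[a, b], [c, d]] acting on the first two coordinates. *)
Definition embed_mx2 {n} (a b c d : R) : 'M[R]_(1 + (1 + n)) :=
  block_mx a%:M (row_mx b%:M 0) (col_mx c%:M 0) (block_mx d%:M 0 0 1%:M).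

Definition embed_row2 {n} (x y : R) : 'rV[R]_(1 + (1 + n)) :=
  row_mx x%:M (row_mx y%:M 0).

Lemma embed_mx2M n a b c d a' b' c' d' :
  @embed_mx2 n a b c d *m embed_mx2 a' b' c' d' =
  embed_mx2 (a * a' + b * c') (a * b' + b * d') (c * a' + d * c') (c * b' + d * d').
Proof.
rewrite /embed_mx2 mulmx_block mul_row_col mul_mx_row mul_row_block mul_col_mx.
rewrite mul_block_col mul_col_row mulmx_block !mulmx0 !mul0mx !mulmx1 ?mul1mx.
rewrite !addr0 !add0r -!scalar_mxM add_row_mx add_col_mx !addr0 -!raddfD /=.
by rewrite add_block_mx !addr0 add0r -raddfD.
Qed.

Lemma embed_mx2_1 n : @embed_mx2 n 1 0 0 1 = 1%:M.
Proof. by rewrite /embed_mx2 !raddf0 row_mx0 col_mx0 -!scalar_mx_block. Qed.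

Lemma embed_row2_mx2 n x y a b c d :
  @embed_row2 n x y *m embed_mx2 a b c d = embed_row2 (x * a + y * c) (x * b + y * d).
Proof.
rewrite /embed_row2 /embed_mx2 mul_row_block mul_row_col mul_mx_row mul_row_block.
by rewrite !mulmx0 !mul0mx !addr0 -!scalar_mxM add_row_mx addr0 -!raddfD.
Qed.

Lemma invertible_embed_mx2 n a b c d :
  a * d - b * c = 1 -> invertible_mx (@embed_mx2 n a b c d).
Proof.
move=> h; exists (embed_mx2 d (- b) (- c) a).
by rewrite !embed_mx2M -embed_mx2_1; split; congr embed_mx2; rewrite -?h; ring.
Qed.

End MatrixDivisibility.

Definition hermite_ring (R : comPzRingType) : Prop :=
  forall a b : R, exists d a' b', a = d * a' /\ b = d * b' /\ comax a' b'.

Definition comax3 (R : comPzRingType) (a b c : R) : Prop :=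
  exists x y z : R, a * x + b * y + c * z = 1.

Definition kaplansky_condition (R : comPzRingType) : Prop :=
  forall a b c : R, comax3 a b c -> exists p q : R, comax (p * a) (p * b + q * c).

Lemma bezout_gcd2 (R : comPzRingType) : bezout_ring R -> forall a b : R,
  exists d u v a' b', [/\ a = d * a', b = d * b' & d = a * u + b * v].
Proof.
move=> bez a b; pose f (i : 'I_2) := if i == ord0 then a else b.
have [d hd] := bez 2 f.
have sum2 c : \sum_(i < 2) c i * f i = c ord0 * a + c ord_max * b.
  by rewrite !big_ord_recl big_ord0 addr0 /f /=; congr (_ + c _ * _); apply: val_inj.
have [[a' ha] [b' hb]] : (exists r, a = d * r) /\ (exists r, b = d * r).
  split; apply/hd.
    by exists (fun i => if i == ord0 then 1 else 0); rewrite sum2 /=; ring.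
  by exists (fun i => if i == ord0 then 0 else 1); rewrite sum2 /=; ring.
have [c hc] : exists c : 'I_2 -> R, d = \sum_(i < 2) c i * f i.
  by apply/hd; exists 1; rewrite mulr1.
exists d, (c ord0), (c ord_max), a', b'.
by split; rewrite // {1}hc sum2 mulrC [b * _]mulrC.
Qed.

Section Congruences.
Variable R : comPzRingType.
Implicit Types a b c g u w x y : R.

Definition unit_mod g u := exists v, rdvd g (u * v - 1).

Lemma unit_modM g u w : unit_mod g u -> unit_mod g w -> unit_mod g (u * w).
Proof.
move=> [v [r hr]] [v' [r' hr']]; exists (v * v'); exists (r * (w * v') + r').
have -> : u * w * (v * v') - 1 = (u * v - 1) * (w * v') + (w * v' - 1) by ring.
by rewrite hr hr'; ring.
Qed.

Lemma comax_unit_mod g u w x y :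
  unit_mod g u -> g = u * x + w * y -> comax u w.
Proof.
move=> [v [r hr]] hg; exists (v - x * r), (- y * r).
have -> : u * (v - x * r) + w * (- y * r) = (u * v - 1) - (u * x + w * y) * r + 1 by ring.
by rewrite hr -hg; ring.
Qed.

Lemma stable_range1_mod_dvd w g :
  stable_range1_mod w -> rdvd g w -> stable_range1_mod g.
Proof.
move=> hw [u hu] a b [x [z [m hm]]].
have [|y [v [r hr]]] := hw a (b * z - g * m).
  exists x, 1; exists 0.
  have -> : a * x + (b * z - g * m) * 1 - 1 = (a * x + b * z - 1) - g * m by ring.
  by rewrite hm; ring.
exists (z * y), v; exists (r * u + m * y * v).
have -> : (a + b * (z * y)) * v - 1 =
          ((a + (b * z - g * m) * y) * v - 1) + g * (m * y * v) by ring.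
by rewrite hr hu; ring.
Qed.

End Congruences.

Section LocallyStable.
Variable R : comPzRingType.
Hypothesis LS : locally_stable R.
Implicit Types a b c : R.

Lemma locally_stable_sr2 a b c :
  comax3 a b c -> exists p q, comax (a + c * p) (b + c * q).
Proof.
move=> [x [y [z h]]].
have hxz : a * x + c * z = 1 - b * y by rewrite -h; ring.
have [k hw] : exists k, stable_range1_mod (b + (a * x + c * z) * k).
  by apply: LS; exists y, 1; rewrite hxz; ring.
set w := b + _ * k in hw.
have [|p [v [r hr]]] := hw a c.
  exists (x * (1 - k * y)), (z * (1 - k * y)), (- y).
  have -> : a * (x * (1 - k * y)) + c * (z * (1 - k * y)) - 1 =
            (a * x + c * z) * (1 - k * y) - 1 by ring.
  by rewrite /w hxz; ring.
exists p, (z * k - p * x * k), (v - x * k * r), (- r).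
have -> : b + c * (z * k - p * x * k) = w - (a + c * p) * x * k by rewrite /w; ring.
have -> : (a + c * p) * (v - x * k * r) + (w - (a + c * p) * x * k) * - r =
          ((a + c * p) * v - 1) - w * r + 1 by ring.
by rewrite hr; ring.
Qed.

Lemma locally_stable_kaplansky : hermite_ring R -> kaplansky_condition R.
Proof.
move=> hermite a b c [x [y [z h]]].
have hax : a * x = 1 - b * y - c * z by rewrite -h; ring.
have [k hw] : exists k, stable_range1_mod (b + (a * x + c * z) * k).
  by apply: LS; exists y, 1; rewrite mulr1 -h; ring.
set w := b + _ * k in hw.
have [g [w1 [c1 [ew [ec [al [be hab]]]]]]] := hermite w c.
have hg : stable_range1_mod g by apply: stable_range1_mod_dvd hw _; exists w1.
have [|ze [v hv]] := hg al (- c1).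
  by exists w1, (- be); exists 0; rewrite mulr0 -hab; ring.
set p := al + - c1 * ze in hv.
have up : unit_mod g p by exists v.
have ua : unit_mod g a.
  exists (x * (1 - k * y)), (- y * w1 - z * (1 - k * y) * c1).
  have -> : g * (- y * w1 - z * (1 - k * y) * c1) =
            - y * (g * w1) - z * (1 - k * y) * (g * c1) by ring.
  have -> : a * (x * (1 - k * y)) - 1 = a * x * (1 - k * y) - 1 by ring.
  by rewrite -ew -ec /w hax; ring.
exists p, (p * z * k + be + ze * w1).
apply: (@comax_unit_mod R g _ _ (x * k) 1); first exact: unit_modM up ua.
have hgpw : p * w + (be + ze * w1) * c = g.
  by rewrite ew ec /p -[RHS]mulr1 -hab; ring.
by rewrite -hgpw /w; ring.
Qed.

Lemma locally_stable_hermite : bezout_ring R -> hermite_ring R.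
Proof.
move=> bez a b; have [d [u [v [a1 [b1 [ha hb hd]]]]]] := bezout_gcd2 bez a b.
set z := 1 - a1 * u - b1 * v.
have dz : d * z = 0.
  have -> : d * z = d - (d * a1) * u - (d * b1) * v by rewrite /z; ring.
  by rewrite -ha -hb {1}hd; ring.
have [|p [q hpq]] := @locally_stable_sr2 a1 b1 z.
  by exists u, v, 1; rewrite /z; ring.
exists d, (a1 + z * p), (b1 + z * q).
by rewrite !mulrDr !mulrA dz !mul0r !addr0.
Qed.

End LocallyStable.

Section HermiteRing.
Variable R : comPzRingType.
Hypothesis hermite : hermite_ring R.

Lemma hermite_row n (v : 'rV[R]_(1 + n)) :
  exists (Q : 'M[R]_(1 + n)) d, invertible_mx Q /\ v *m Q = row_mx d%:M 0.
Proof.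
elim: n v => [|n IH] v.
  exists 1%:M, (v 0 0); split; first by exists 1%:M; rewrite mulmx1.
  rewrite mulmx1; apply/matrixP => i j; rewrite (ord1 i) mxE.
  by case: splitP => [k _ | [] //]; rewrite (ord1 j) (ord1 k) mxE mulr1n.
pose v' : 'rV[R]_(1 + n.+1) := v.
have [Q' [e [iQ' vQ']]] := IH (rsubmx v').
have [d [a1 [e1 [ha [he [x [y hxy]]]]]]] := hermite (lsubmx v' 0 0) e.
exists (block_mx (1%:M : 'M_1) 0 0 Q' *m embed_mx2 x (- e1) y a1), d; split.
  apply: invertibleM; first exact: (invertible_block1 1 iQ').
  by apply: invertible_embed_mx2; rewrite -hxy; ring.
rewrite mulmxA.
change (v' *m (block_mx (1%:M : 'M_1) 0 0 Q' : 'M_(1 + n.+1)) *m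
  (embed_mx2 x (- e1) y a1 : 'M_(1 + n.+1)) = row_mx d%:M 0).
rewrite -[v']hsubmxK mul_row_block !mulmx0 addr0 add0r mulmx1 vQ'.
rewrite [lsubmx v']mx11_scalar.
change (@embed_row2 _ n (lsubmx v' 0 0) e *m embed_mx2 x (- e1) y a1 = row_mx d%:M 0).
rewrite embed_row2_mx2 /embed_row2 ha he.
have -> : d * a1 * - e1 + d * e1 * a1 = 0 by ring.
by rewrite raddf0 row_mx0 -[in RHS](mulr1 d) -hxy; congr (row_mx _%:M _); ring.
Qed.

Lemma row_gcd n (v : 'rV[R]_n) : exists g, dvd_mx g v /\ rideal v g.
Proof.
case: n v => [|n] v.
  by exists 0; split; [move=> ? [] | exists 0; rewrite mulmx0 mxE].
have [Q [d [iQ vQ]]] := hermite_row v.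
by exists d; apply: row_reduction_gcd iQ vQ.
Qed.

End HermiteRing.

Section DiagonalReduction.
Variable R : comPzRingType.

Lemma dvd_mx_scale d m n (A : 'M[R]_(m, n)) :
  dvd_mx d A -> exists A' : 'M[R]_(m, n), A = d *: A'.
Proof.
move=> hA; have /fin_all_exists [f hf] : forall ij : 'I_m * 'I_n,
  exists r, A ij.1 ij.2 = d * r by move=> [i j]; apply: hA.
by exists (\matrix_(i, j) f (i, j)); apply/matrixP => i j; rewrite !mxE -(hf (i, j)).
Qed.

Lemma invertible_block_lower m n (X : 'M[R]_(n, m)) :
  invertible_mx (block_mx 1%:M 0 X 1%:M).
Proof.
exists (block_mx 1%:M 0 (- X) 1%:M); rewrite !mulmx_block.
rewrite !mulmx0 !mul0mx !mulmx1 !mul1mx !addr0 !add0r addNr subrr.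
by split; rewrite -scalar_mx_block.
Qed.

Lemma invertible_block_upper m n (X : 'M[R]_(m, n)) :
  invertible_mx (block_mx 1%:M X 0 1%:M).
Proof.
exists (block_mx 1%:M (- X) 0 1%:M); rewrite !mulmx_block.
rewrite !mulmx0 !mul0mx !mulmx1 !mul1mx !addr0 !add0r addNr subrr.
by split; rewrite -scalar_mx_block.
Qed.

Lemma clear_corner m n (B : 'M[R]_(1 + m, 1 + n)) d :
  ulsubmx B = d%:M -> dvd_mx d B -> exists P Q (C : 'M[R]_(m, n)),
  [/\ invertible_mx P, invertible_mx Q, dvd_mx d C
    & P *m B *m Q = block_mx d%:M 0 0 C].
Proof.
move=> hul dB.
have [c hc] : exists c, ursubmx B = d *: c.
  by apply: dvd_mx_scale => i j; rewrite !mxE; apply: dB.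
have [r hr] : exists r, dlsubmx B = d *: r.
  by apply: dvd_mx_scale => i j; rewrite !mxE; apply: dB.
exists (block_mx 1%:M 0 (- r) 1%:M), (block_mx 1%:M (- c) 0 1%:M).
exists (drsubmx B - r *m ursubmx B); split.
- exact: invertible_block_lower.
- exact: invertible_block_upper.
- move=> i j; rewrite [X in rdvd _ X]mxE.
  apply: rdvdD; first by rewrite !mxE; apply: dB.
  by rewrite mxE; apply/rdvdN/dvd_mxMl => a b; rewrite !mxE; apply: dB.
rewrite -{1}[B]submxK hul hc hr !mulmx_block.
rewrite !mulmx0 !mul0mx !mulmx1 !mul1mx !addr0.
by rewrite !mul_mx_scalar mul_scalar_mx !scalerN !addNr !mul0mx !add0r addrC mulNmx.
Qed.

Lemma diag_divchain_block d m n (D : 'M[R]_(m, n)) : diag_divchain D -> dvd_mx d D ->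
  diag_divchain (block_mx (d%:M : 'M[R]_1) 0 0 D).
Proof.
move=> [D0 Ddvd] dD; split.
  move=> i j; case: (split_ordP i) => [[[|//] ?] -> | i1 ->];
    case: (split_ordP j) => [[[|//] ?] -> | j1 ->] /= hij.
  - by case: hij.
  - by rewrite block_mxEur mxE.
  - by rewrite block_mxEdl mxE.
  - by rewrite block_mxEdr; apply: D0 => e; apply: hij; rewrite e.
move=> i i' j j'; case: (split_ordP i) => [[[|//] ?] -> | i1 ->];
  case: (split_ordP j) => [[[|//] ?] -> | j1 ->];
  case: (split_ordP i') => [[[|//] ?] -> | i1' ->];
  case: (split_ordP j') => [[[|//] ?] -> | j1' ->] /= hij hij' hii'; try lia.
- by rewrite block_mxEul block_mxEdr mxE mulr1n; apply: dD.
- by rewrite !block_mxEdr; apply: Ddvd; lia.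
Qed.

Lemma diagonal_reduction_of_divchain m n (D : 'M[R]_(m, n)) :
  diag_divchain D -> admits_diagonal_reduction D.
Proof.
move=> hD; exists 1%:M, 1%:M; rewrite mul1mx mulmx1.
by split; [|split=> //]; apply: invertible1.
Qed.

Lemma diagonal_reduction_empty m n (A : 'M[R]_(m, n)) :
  (m * n = 0)%N -> admits_diagonal_reduction A.
Proof.
move=> mn0; apply: diagonal_reduction_of_divchain.
by split=> [i j | i i' j j']; have := ltn_ord i; have := ltn_ord j; nia.
Qed.

Lemma diagonal_reduction_mulmx m n (A : 'M[R]_(m, n)) P Q :
  invertible_mx P -> invertible_mx Q ->
  admits_diagonal_reduction (P *m A *m Q) -> admits_diagonal_reduction A.
Proof.
move=> iP iQ [P' [Q' [iP' [iQ' hD]]]]; exists (P' *m P), (Q *m Q').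
split; first exact: invertibleM iP' iP.
by split; [exact: invertibleM iQ iQ' | rewrite !mulmxA in hD *].
Qed.

Lemma diagonal_reduction_block d m n (C : 'M[R]_(m, n)) :
  admits_diagonal_reduction C -> dvd_mx d C ->
  admits_diagonal_reduction (block_mx (d%:M : 'M[R]_1) 0 0 C).
Proof.
move=> [P [Q [iP [iQ hD]]]] dC.
apply: (@diagonal_reduction_mulmx _ _ _ (block_mx 1%:M 0 0 P) (block_mx 1%:M 0 0 Q)).
- exact: invertible_block1.
- exact: invertible_block1.
apply: diagonal_reduction_of_divchain.
rewrite !mulmx_block !mulmx0 !mul0mx !mulmx1 !mul1mx !addr0 !add0r.
by rewrite mul0mx; apply: diag_divchain_block => //; apply/dvd_mxMr/dvd_mxMl.
Qed.

End DiagonalReduction.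

Section ElementaryDivisor.
Variable R : comPzRingType.
Hypotheses (hermite : hermite_ring R) (kaplansky : kaplansky_condition R).

Lemma kaplansky_gcd3 (a b c : R) : exists p q g a' b' c',
  [/\ a = g * a', b = g * b', c = g * c' & comax (p * a') (p * b' + q * c')].
Proof.
have [h [b1 [c1 [hb [hc [x1 [y1 h1]]]]]]] := hermite b c.
have [g [a' [h' [ha [hh [x2 [y2 h2]]]]]]] := hermite a h.
have [|p [q hpq]] := @kaplansky a' (h' * b1) (h' * c1).
  exists x2, (x1 * y2), (y1 * y2).
  by rewrite -h2 -[y2 in RHS]mul1r -h1; ring.
exists p, q, g, a', (h' * b1), (h' * c1).
by split=> //; rewrite ?hb ?hc hh mulrA.
Qed.

Lemma row_pair_gcd n (u v : 'rV[R]_(1 + n)) : exists s t g,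
  [/\ dvd_mx g u, dvd_mx g v & rideal (s *: u + t *: v) g].
Proof.
have [Q [d [iQ uQ]]] := hermite_row hermite u.
pose v1 : 'rV[R]_(1 + n) := v *m Q.
have [e [de re]] := row_gcd hermite (rsubmx v1).
have [p [q [g [e' [c' [d' [ee ec ed [x [y hxy]]]]]]]]] :=
  kaplansky_gcd3 e (lsubmx v1 0 0) d.
exists q, p, g; split.
- apply: (dvd_mx_invertible iQ); rewrite uQ.
  by apply: dvd_row_mx; [apply: dvd_mx_scalar; exists d' | apply: dvd_mx0].
- apply: (dvd_mx_invertible iQ); rewrite -[v *m Q]/v1 -[v1]hsubmxK.
  apply: dvd_row_mx; last by apply: dvd_mx_trans de; exists e'.
  by rewrite [lsubmx v1]mx11_scalar; apply: dvd_mx_scalar; exists c'.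
apply/(rideal_invertibler _ _ iQ).
rewrite mulmxDl -!scalemxAl uQ -[v *m Q]/v1 -[v1]hsubmxK [lsubmx v1]mx11_scalar.
rewrite !scale_row_mx add_row_mx scaler0 add0r !scale_scalar_mx -raddfD /=.
have -> : g = p * e * x + (q * d + p * lsubmx v1 0 0) * y.
  by rewrite ee ec ed -[LHS]mulr1 -hxy; ring.
apply: ridealD; apply: ridealMr.
  by apply/rideal_row_mxr/rideal_scale.
exact/rideal_row_mxl/rideal_scalar_mx.
Qed.

Lemma row_combination_gcd m n (A : 'M[R]_(1 + m, 1 + n)) :
  exists (p : 'rV[R]_(1 + m)) g, dvd_mx g A /\ rideal (p *m A) g.
Proof.
elim: m A => [|m IH] A.
  have [g [gA rA]] := row_gcd hermite A.
  by exists 1%:M, g; rewrite mul1mx.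
pose A' : 'M[R]_(1 + (1 + m), 1 + n) := A.
have [p [h [hA rh]]] := IH (dsubmx A').
have [s [t [g [gu gw rg]]]] := row_pair_gcd (usubmx A') (p *m dsubmx A').
exists (row_mx s%:M (t *: p)), g; split.
  rewrite -[A]/A' -[A']vsubmxK; apply: dvd_col_mx => //.
  by apply: dvd_mx_trans hA; apply: dvd_rideal gw rh.
by rewrite -[A]/A' -[A']vsubmxK mul_row_col mul_scalar_mx -scalemxAl.
Qed.

Lemma corner_gcd m n (A : 'M[R]_(1 + m, 1 + n)) : exists P Q d,
  [/\ invertible_mx P, invertible_mx Q, dvd_mx d (P *m A *m Q)
    & ulsubmx (P *m A *m Q) = d%:M].
Proof.
have [p [g [gA rg]]] := row_combination_gcd A.
have [Q0 [e [[P [h1 h2]] pQ0]]] := hermite_row hermite p.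
have [Q [d [iQ rQ]]] := hermite_row hermite (usubmx P *m A).
have [dr _] := row_reduction_gcd iQ rQ.
have pA : p *m A = e *: (usubmx P *m A).
  rewrite -[p]mulmx1 -h1 mulmxA pQ0 -{1}[P]vsubmxK mul_row_col mul0mx addr0.
  by rewrite mul_scalar_mx scalemxAl.
have dg : rdvd d g.
  by apply: dvd_rideal rg; rewrite pA => i j; rewrite mxE; apply: rdvdMl.
exists P, Q, d; split => //; first by exists Q0.
  by apply/dvd_mxMr/dvd_mxMl/dvd_mx_trans/gA.
by rewrite /ulsubmx -!mul_usub_mx rQ row_mxKl.
Qed.

Theorem hermite_kaplansky_edr : elementary_divisor_ring R.
Proof.
move=> m; elim: m => [|m IH] [|n] A; try by apply: diagonal_reduction_empty; lia.
have [P [Q [d [iP iQ dA hd]]]] := corner_gcd (A : 'M[R]_(1 + m, 1 + n)).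
have [P1 [Q1 [C [iP1 iQ1 dC hC]]]] := clear_corner hd dA.
apply: (diagonal_reduction_mulmx (invertibleM iP1 iP) (invertibleM iQ iQ1)).
have -> : P1 *m P *m A *m (Q *m Q1) = block_mx d%:M 0 0 C by rewrite -hC !mulmxA.
exact: diagonal_reduction_block (IH _ C) dC.
Qed.

End ElementaryDivisor.

Lemma edr_bezout (R : comPzRingType) : elementary_divisor_ring R -> bezout_ring R.
Proof.
move=> edr [|n] a.
  exists 0 => x; split=> [[c ->] | [r ->]]; first by exists 0; rewrite big_ord0 mul0r.
  by exists (fun=> 0); rewrite big_ord0 mul0r.
have [P [Q [iP [iQ [D0 _]]]]] := edr _ _ (\row_i a i : 'rV[R]_(1 + n)).
set D := P *m _ *m Q in D0.
have DE : D = row_mx (D 0 0)%:M 0.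
  apply/matrixP => i j; rewrite (ord1 i); case: (split_ordP j) => [j0 -> | k ->].
    by rewrite (ord1 j0) row_mxEl [RHS]mxE mulr1n; congr (D _ _); apply: val_inj.
  by rewrite (row_mxEr (D 0 0)%:M (0 : 'rV_n)) [RHS]mxE; apply: D0.
exists (D 0 0) => x; rewrite -rideal_sumP.
apply: iff_trans (rideal_row_scalar n (D 0 0) x); rewrite -DE.
by rewrite (rideal_invertibler _ _ iQ) (rideal_invertiblel _ _ iP).
Qed.

Theorem theorem3p3 (R : comPzRingType) :
  locally_stable R -> (elementary_divisor_ring R <-> bezout_ring R).
Proof.
move=> LS; split; first exact: edr_bezout.
move=> bez; have hermite := locally_stable_hermite LS bez.
exact: hermite_kaplansky_edr hermite (locally_stable_kaplansky LS hermite).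
Qed.
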